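(* Let $\Sigma$ be a graded alphabet and $t\in T_\Sigma$. Then the sequential subtree automaton $\mathrm{seq}(A_t)$ is isomorphic to the quotient $(A_t)_{\sim_\mathrm{h}}$ of the subtree automaton $A_t$ by the relation $\sim_\mathrm{h}$.
   Context: A graded alphabet is a finite set $\Sigma=\bigcup_{k\in\mathbb{N}}\Sigma_k$; $T_\Sigma$ is the set of trees $f(t_1,\ldots,t_k)$ with $f\in\Sigma_k$. Weights are in $(\mathbb{N},+)$. A RWTA is $A=(\Sigma,Q,\nu,\delta)$ with $Q$ finite, $\nu:Q\to\mathbb{N}$, $\delta\subseteq\bigcup_k Q\times\Sigma_k\times Q^k$; $\delta(f,q_1,\ldots,q_k)=\{q\mid(q,f,q_1,\ldots,q_k)\in\delta\}$. A morphism from $A_1=(\Sigma,Q_1,\nu_1,\delta_1)$ to $A_2=(\Gamma,Q_2,\nu_2,\delta_2)$ is a map $\mu$ sending states of $A_1$ to states of $A_2$ and symbols of $\Sigma_k$ to symbols of $\Gamma_k$, such that $(\mu(q),\mu(f),\mu(q_1),\ldots,\mu(q_k))\in\delta_2$ whenever $(q,f,q_1,\ldots,q_k)\in\delta_1$, and $\nu_2(\mu(q))=\nu_1(q)$ for all $q\in Q_1$; it is an isomorphism if it has an inverse $\mu^{-1}$ which is a morphism from $A_2$ to $A_1$. For $t=f(t_1,\ldots,t_k)$, $\mathrm{SubTree}(t)=\{t\}\cup\bigcup_j\mathrm{SubTree}(t_j)$ and $\mathrm{SubTreeSeries}_t=t+\sum_j\mathrm{SubTreeSeries}_{t_j}$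 ($\mathrm{SubTreeSeries}_t(s)$ is the number of nodes of $t$ whose subtree equals $s$). The tree $t^\sharp$ is obtained from $t$ by indexing each symbol occurrence with its position in a preorder traversal (indexed symbols are distinct and keep their arity); $\Sigma_{t^\sharp}$ is the set of indexed symbols; $\mathrm{h}$ erases indices. The subtree automaton $A_t=(\Sigma,Q,\nu,\delta)$ has $Q=\mathrm{SubTree}(t^\sharp)$, $\nu\equiv1$, and for $f\in\Sigma_{t^\sharp}$ of arity $k$: $t_{k+1}\in\delta(\mathrm{h}(f),t_1,\ldots,t_k)$ iff $t_{k+1}=f(t_1,\ldots,t_k)$. The relation $\sim_\mathrm{h}$ on $Q$ is $r_1\sim_\mathrm{h}r_2\iff\mathrm{h}(r_1)=\mathrm{h}(r_2)$. The quotient of a RWTA $(\Sigma,Q,\nu,\delta)$ by an equivalence $\sim$ on $Q$ is $(\Sigma,Q_\sim,\nu',\delta')$ with $Q_\sim$ the set of classes, $\nu'(C)=\sum_{q\in C}\nu(q)$, and $C_{k+1}\in\delta'(f,C_1,\ldots,C_k)$ iff there are $q_i\in C_i$ with $q_{k+1}\in\delta(f,q_1,\ldots,q_k)$. The sequential subtree automaton is $\mathrm{seq}(A_t)=(\Sigma,\mathrm{SubTree}(t),\nu'',\delta'')$ with $\nu''(t')=\mathrm{SubTreeSeries}_t(t')$ and, for $f\in\Sigma_k$, $t_{k+1}\in\delta''(f,t_1,\ldots,t_k)$ iff $t_{k+1}=f(t_1,\ldots,t_k)$. *)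

From HB Require Import structures.
From mathcomp Require Import all_boot.
Set Implicit Arguments. Unset Strict Implicit. Unset Printing Implicit Defensive.

Inductive tree (S : Type) := Node of S & seq (tree S).
Arguments Node {S}.

Fixpoint tree_enc (S : Type) (t : tree S) : GenTree.tree S :=
  let: Node f ts := t in GenTree.Node 0 (GenTree.Leaf f :: map (@tree_enc S) ts).

Fixpoint tree_dec (S : Type) (g : GenTree.tree S) : option (tree S) :=
  match g with
  | GenTree.Node _ (GenTree.Leaf f :: gs) => Some (Node f (pmap (@tree_dec S) gs))
  | _ => None
  end.

Lemma tree_encK (S : Type) : pcancel (@tree_enc S) (@tree_dec S).
Proof.
rewrite /pcancel; fix IH 1; case=> f ts /=; congr (Some (Node f _)).
move: ts; fix IHl 1; case=> [|t ts] //=.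
by rewrite IH /= IHl.
Qed.

HB.instance Definition _ (S : countType) :=
  Countable.copy (tree S) (pcan_type (@tree_encK S)).

Fixpoint wf_tree (S : Type) (ar : S -> nat) (t : tree S) : bool :=
  let: Node f ts := t in (size ts == ar f) && all (@wf_tree S ar) ts.

(* SubTree(t), as a list (with multiplicity, one entry per node) *)
Fixpoint subtrees (S : Type) (t : tree S) : seq (tree S) :=
  let: Node f ts := t in t :: flatten (map (@subtrees S) ts).

Fixpoint SubTreeSeries (S : countType) (t : tree S) (s : tree S) : nat :=
  let: Node f ts := t in (t == s) + sumn (map (fun u => SubTreeSeries u s) ts).

(* t^sharp : index each symbol occurrence with its preorder position (root = 1) *)
Fixpoint sharp_aux (S : Type) (t : tree S) (n : nat) : tree (S * nat) * nat :=
  let: Node f ts := t in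
  let fix go (us : seq (tree S)) (m : nat) : seq (tree (S * nat)) * nat :=
    match us with
    | [::] => ([::], m)
    | u :: us' => let: (u', m1) := sharp_aux u m in
                  let: (us'', m2) := go us' m1 in (u' :: us'', m2)
    end in
  let: (ts', m) := go ts n.+1 in (Node (f, n) ts', m).

Definition sharp (S : Type) (t : tree S) : tree (S * nat) := (sharp_aux t 1).1.

Fixpoint erase (S : Type) (t : tree (S * nat)) : tree S :=
  let: Node g ts := t in Node g.1 (map (@erase S) ts).

(* A RWTA over the graded alphabet (Sig, ar): finite state set, weight nu,
   transition relation delta q f [q1;...;qk] meaning (q, f, q1, ..., qk) \in delta. *)
Record rwta (Sig : Type) (ar : Sig -> nat) := RWTA {
  state : finType;
  nu : state -> nat;
  delta : state -> Sig -> seq state -> Prop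
}.
Arguments RWTA {Sig ar}.
Arguments state {Sig ar}.
Arguments nu {Sig ar}.
Arguments delta {Sig ar}.

Definition is_morphism (Sig Gam : Type) (ar1 : Sig -> nat) (ar2 : Gam -> nat)
    (A1 : rwta ar1) (A2 : rwta ar2)
    (muQ : state A1 -> state A2) (muS : Sig -> Gam) : Prop :=
  [/\ (forall f, ar2 (muS f) = ar1 f),
      (forall q f qs, delta A1 q f qs -> delta A2 (muQ q) (muS f) (map muQ qs))
    & (forall q, nu A2 (muQ q) = nu A1 q)].

Arguments is_morphism {Sig Gam ar1 ar2}.

Definition isomorphic (Sig Gam : Type) (ar1 : Sig -> nat) (ar2 : Gam -> nat)
    (A1 : rwta ar1) (A2 : rwta ar2) : Prop :=
  exists (muQ : state A1 -> state A2) (muS : Sig -> Gam)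
         (muQ' : state A2 -> state A1) (muS' : Gam -> Sig),
    [/\ is_morphism A1 A2 muQ muS, is_morphism A2 A1 muQ' muS',
        cancel muQ muQ' /\ cancel muQ' muQ
      & cancel muS muS' /\ cancel muS' muS].

Definition eqclass (Q : finType) (r : rel Q) (q : Q) : {set Q} := [set q' | r q q'].

Definition is_class (Q : finType) (r : rel Q) : pred {set Q} :=
  fun C => [exists q, C == eqclass r q].

Definition classes_of (Q : finType) (r : rel Q) : finType := {C : {set Q} | is_class r C}.

Definition quotient (Sig : Type) (ar : Sig -> nat) (A : rwta ar) (r : rel (state A))
  : rwta ar :=
  @RWTA Sig ar (classes_of r)
    (fun C => \sum_(q in val C) nu A q)
    (fun C f Cs => exists (q : state A) (qs : seq (state A)),
        [/\ q \in val C, size qs = size Cs,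
            all2 (fun q' (C' : classes_of r) => q' \in val C') qs Cs
          & delta A q f qs]).

Definition SubTreeSt (S : countType) (t : tree S) : finType := seq_sub (subtrees t).

Definition subtree_automaton (Sig : finType) (ar : Sig -> nat) (t : tree Sig) : rwta ar :=
  @RWTA Sig ar (SubTreeSt (sharp t))
    (fun _ => 1)
    (fun q f qs => exists g : Sig * nat,
        [/\ g.1 = f, size qs = ar f & val q = Node g (map val qs)]).

Definition sim_h (Sig : finType) (ar : Sig -> nat) (t : tree Sig)
  : rel (state (subtree_automaton ar t)) :=
  fun r1 r2 => erase (val r1) == erase (val r2).

Definition seq_subtree_automaton (Sig : finType) (ar : Sig -> nat) (t : tree Sig)
  : rwta ar :=
  @RWTA Sig ar (SubTreeSt t)
    (fun t' => SubTreeSeries t (val t'))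
    (fun q f qs => size qs = ar f /\ val q = Node f (map val qs)).

Arguments isomorphic {Sig Gam ar1 ar2}.
Arguments quotient {Sig ar}.
Arguments subtree_automaton {Sig}.
Arguments sim_h {Sig}.
Arguments seq_subtree_automaton {Sig}.
Arguments wf_tree {S}.

(* Numbering the nodes of t in preorder makes the subtrees of t^sharp pairwise
   distinct, one for each node of t, and erasing the indices sends the subtree
   of t^sharp rooted at a node to the subtree of t rooted at the same node.
   Hence the ~h-class of a state is the set of nodes of t carrying a given
   subtree s: the classes are in bijection with SubTree(t), the class of s has
   SubTreeSeries_t(s) elements, which is its weight in the quotient, and in
   both automata the transitions say that a state is f applied to its
   children. *)
From mathcomp Require Import all_boot.
From Stdlib Require List.
Set Implicit Arguments. Unset Strict Implicit. Unset Printing Implicit Defensive.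

Lemma tree_ind_in (S : Type) (P : tree S -> Prop) :
  (forall f ts, (forall u, List.In u ts -> P u) -> P (Node f ts)) ->
  forall t, P t.
Proof.
move=> IHnode; fix IH 1; case=> f ts; apply: IHnode.
move: ts; fix IHts 1; case=> [|u us] v /=; first by case.
by case=> [<- | v_us]; [exact: IH | exact: IHts us v v_us].
Qed.

Section Trees.

Variable S : Type.

Lemma size_subtrees_Node f (ts : seq (tree S)) :
  size (subtrees (Node f ts)) = (sumn [seq size (subtrees u) | u <- ts]).+1.
Proof. by rewrite /= size_flatten /shape -map_comp. Qed.

Lemma map_erase_subtrees (u : tree (S * nat)) :
  map (@erase S) (subtrees u) = subtrees (erase u).
Proof.
elim/tree_ind_in: u => f ts IH /=; congr (_ :: _).
rewrite map_flatten -!map_comp; congr flatten.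
by elim: ts IH => //= v vs IHvs IH; rewrite IH ?IHvs //=; auto.
Qed.

(* The anonymous local fixpoint through which [sharp_aux] numbers the children. *)
Fixpoint sharp_seq (us : seq (tree S)) (n : nat) : seq (tree (S * nat)) * nat :=
  if us is u :: us' then
    let: (u', m1) := sharp_aux u n in
    let: (us'', m2) := sharp_seq us' m1 in (u' :: us'', m2)
  else ([::], n).

Lemma sharp_aux_Node f (ts : seq (tree S)) n :
  sharp_aux (Node f ts) n = let: (ts', m) := sharp_seq ts n.+1 in (Node (f, n) ts', m).
Proof.
suff -> : sharp_seq ts n.+1 = (fix go (us : seq (tree S)) (m : nat) :=
    match us with
    | [::] => ([::], m)
    | u :: us' => let: (u', m1) := sharp_aux u m in
                  let: (us'', m2) := go us' m1 in (u' :: us'', m2)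
    end) ts n.+1 by [].
by elim: ts n.+1 => //= u us IH m; case: (sharp_aux u m) => u' m1; rewrite IH.
Qed.

Definition root_index (u : tree (S * nat)) : nat := let: Node g _ := u in g.2.

Lemma sharp_auxP (t : tree S) n :
  [/\ (sharp_aux t n).2 = n + size (subtrees t),
      erase (sharp_aux t n).1 = t
    & map root_index (subtrees (sharp_aux t n).1) = iota n (size (subtrees t))].
Proof.
elim/tree_ind_in: t n => f ts IH n.
have IHseq m : let sts := sharp_seq ts m in
    [/\ sts.2 = m + sumn [seq size (subtrees u) | u <- ts],
        map (@erase S) sts.1 = ts
      & map root_index (flatten (map (@subtrees _) sts.1))
          = iota m (sumn [seq size (subtrees u) | u <- ts])].
  elim: ts IH m => [|u us IHus] IH m /=; first by rewrite addn0.
  have [Hm Hu Hidx] := IH u (or_introl erefl) m.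
  case: (sharp_aux u m) Hm Hu Hidx => [u' m1] /= Hm Hu Hidx.
  have [Hm2 Hus Hidxs] := IHus (fun w Hw => IH w (or_intror Hw)) m1.
  case: sharp_seq Hm2 Hus Hidxs => [us' m2] /= Hm2 Hus Hidxs.
  by rewrite Hm2 Hm addnA Hu Hus map_cat Hidx Hidxs Hm iotaD.
rewrite sharp_aux_Node size_subtrees_Node.
have [Hm Hts Hidx] := IHseq n.+1.
by case: sharp_seq Hm Hts Hidx => [ts' m] /= -> -> ->; rewrite addSnnS.
Qed.

Lemma uniq_root_index_sharp (t : tree S) : uniq (map root_index (subtrees (sharp t))).
Proof. by have [_ _ ->] := sharp_auxP t 1; apply: iota_uniq. Qed.

Lemma map_erase_subtrees_sharp (t : tree S) :
  map (@erase S) (subtrees (sharp t)) = subtrees t.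
Proof. by have [_ Ht _] := sharp_auxP t 1; rewrite map_erase_subtrees Ht. Qed.

End Trees.

Section CountTrees.

Variable S : countType.

Lemma mem_subtrees_self (u : tree S) : u \in subtrees u.
Proof. by case: u => f ts; rewrite inE eqxx. Qed.

Lemma subtrees_trans (x y : tree S) :
  x \in subtrees y -> {subset subtrees x <= subtrees y}.
Proof.
elim/tree_ind_in: y => f ts IH; rewrite inE => /orP[/eqP-> // | ].
case/flattenP=> _ /mapP[u u_ts ->] x_u z z_x; rewrite inE; apply/orP; right.
apply/flattenP; exists (subtrees u); first exact: map_f.
suff u_In : List.In u ts by exact: IH u_In x_u z z_x.
elim: ts u_ts {IH} => //= v vs IHvs; rewrite inE => /orP[/eqP | /IHvs]; auto.
Qed.

Lemma mem_subtrees_child (y : tree S) g us u :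
  Node g us \in subtrees y -> u \in us -> u \in subtrees y.
Proof.
move=> gus_y u_us; apply: subtrees_trans gus_y _ _; rewrite inE; apply/orP; right.
by apply/flattenP; exists (subtrees u); [apply: map_f | apply: mem_subtrees_self].
Qed.

Lemma SubTreeSeries_count (t s : tree S) :
  SubTreeSeries t s = count (pred1 s) (subtrees t).
Proof.
elim/tree_ind_in: t => f ts IH /=; congr (_ + _).
rewrite count_flatten -map_comp; congr sumn.
by elim: ts IH => //= u us IHus IH; rewrite IH ?IHus //=; auto.
Qed.

Lemma uniq_subtrees_sharp (t : tree S) : uniq (subtrees (sharp t)).
Proof. exact: map_uniq (uniq_root_index_sharp t). Qed.

End CountTrees.

Lemma card_seq_sub_pred (T : countType) (s : seq T) (P : pred T) : uniq s ->
  #|[set q : seq_sub s | P (val q)]| = count P s.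
Proof.
move=> s_uniq; rewrite cardsE cardE /enum_mem size_filter.
rewrite -[in RHS](val_seq_sub_enum s_uniq) count_map unlock.
exact: eq_count.
Qed.

Lemma map_val_pmap_insub (T : Type) (p : pred T) (sT : subType p) (s : seq T) :
  all p s -> map val (pmap insub s : seq sT) = s.
Proof.
by move=> /all_filterP ps; rewrite (pmap_filter (insubK sT)) (eq_filter (isSome_insub sT)).
Qed.

Section SubtreeQuotient.

Variables (Sig : finType) (ar : Sig -> nat) (t : tree Sig).

Local Notation At := (subtree_automaton ar t).
Local Notation seqAt := (seq_subtree_automaton ar t).
Local Notation Q := (SubTreeSt (sharp t)).
Local Notation P := (SubTreeSt t).
Local Notation sim := (sim_h ar t).
Local Notation class := (classes_of sim).

Definition erase_class (s : tree Sig) : {set Q} := [set q : Q | erase (val q) == s].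

Lemma erase_state_subproof (q : Q) : erase (val q) \in subtrees t.
Proof.
have : erase (val q) \in map (@erase _) (subtrees (sharp t)) by apply/map_f/(valP q).
by rewrite map_erase_subtrees_sharp.
Qed.

Definition erase_state (q : Q) : P := SeqSub (erase_state_subproof q).

Lemma erase_state_onto (p : P) : exists q : Q, erase_state q = p.
Proof.
have : val p \in map (@erase _) (subtrees (sharp t)).
  by rewrite map_erase_subtrees_sharp (valP p).
by case/mapP=> x x_sharp p_x; exists (SeqSub x_sharp); apply: val_inj.
Qed.

Lemma erase_class_is_class (p : P) : is_class sim (erase_class (val p)).
Proof.
have [q <-] := erase_state_onto p; apply/existsP; exists q.
by apply/eqP/setP => q'; rewrite !inE eq_sym.
Qed.

Definition class_of_subtree (p : P) : class :=
  exist _ (erase_class (val p)) (erase_class_is_class p).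

Lemma classE (C : class) q : q \in val C -> val C = erase_class (erase (val q)).
Proof.
case: C => C /= /existsP[q' /eqP->]; rewrite inE => /eqP q'q.
by apply/setP => q''; rewrite !inE /sim_h q'q eq_sym.
Qed.

Lemma class_nonempty (C : class) : exists q, q \in val C.
Proof. by case: C => C /= /existsP[q /eqP->]; exists q; rewrite inE /sim_h. Qed.

Definition root_state : Q := SeqSub (mem_subtrees_self (sharp t)).

Definition subtree_of_class (C : class) : P :=
  erase_state (odflt root_state [pick q in val C]).

Lemma subtree_of_classE (C : class) q : q \in val C -> subtree_of_class C = erase_state q.
Proof.
move=> qC; apply: val_inj; rewrite /subtree_of_class.
case: pickP => [q' q'C | /(_ q)]; last by rewrite qC.
by move: q'C; rewrite (classE qC) inE => /eqP.
Qed.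

Lemma card_erase_class s : #|erase_class s| = SubTreeSeries t s.
Proof.
rewrite /erase_class (card_seq_sub_pred (fun x => erase x == s) (uniq_subtrees_sharp t)).
by rewrite SubTreeSeries_count -[subtrees t]map_erase_subtrees_sharp count_map.
Qed.

Lemma weight_class (C : class) q :
  q \in val C -> nu (quotient At sim) C = SubTreeSeries t (erase (val q)).
Proof. by move=> qC; rewrite /= sum1_card (classE qC) card_erase_class. Qed.

Lemma all2_mem_class_of_subtree (qs : seq Q) (ps : seq P) :
  map (@erase _) (map val qs) = map val ps ->
  all2 (fun q (C : class) => q \in val C) qs (map class_of_subtree ps).
Proof. by elim: qs ps => [|q qs IH] [|p ps] //= [qp /IH->]; rewrite inE qp eqxx. Qed.

Lemma map_subtree_of_class (qs : seq Q) (Cs : seq class) :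
  all2 (fun q (C : class) => q \in val C) qs Cs ->
  map val (map subtree_of_class Cs) = map (@erase _) (map val qs).
Proof.
elim: qs Cs => [|q qs IH] [|C Cs] //= /andP[qC /IH->].
by have /(congr1 val) /= -> := subtree_of_classE qC.
Qed.

Lemma children_states (x : Q) g us :
  val x = Node g us -> exists qs : seq Q, map val qs = us.
Proof.
move=> xE; exists (pmap insub us); apply: map_val_pmap_insub.
apply/allP => u u_us; apply: (mem_subtrees_child (g := g) _ u_us); rewrite -xE; exact: valP.
Qed.

Lemma class_of_subtree_morphism :
  is_morphism seqAt (quotient At sim) class_of_subtree id.
Proof.
split=> // [p f ps [ps_ar pE] | p]; last first.
  by have [q <-] := erase_state_onto p; rewrite (weight_class (q := q)) // inE.
have [q qp] := erase_state_onto p.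
have /(congr1 val) := qp; rewrite /= pE; case qE: (val q) => [g us] /= [gf erase_us].
have [qs qsE] := children_states qE.
have erase_qs : map (@erase _) (map val qs) = map val ps by rewrite qsE.
have size_qs : size qs = size ps by rewrite -(size_map val ps) -erase_qs !size_map.
exists q, qs; split.
- by rewrite inE -pE -qp.
- by rewrite size_map.
- exact: all2_mem_class_of_subtree.
- by exists g; rewrite gf size_qs ps_ar qE qsE.
Qed.

Lemma subtree_of_class_morphism :
  is_morphism (quotient At sim) seqAt subtree_of_class id.
Proof.
split=> // [C f Cs [q [qs [qC size_qs qsCs [g [gf qs_ar qE]]]]] | C].
  split; first by rewrite size_map -size_qs.
  by rewrite (subtree_of_classE qC) /= qE /= gf (map_subtree_of_class qsCs).
by have [q qC] := class_nonempty C; rewrite (weight_class qC) (subtree_of_classE qC).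
Qed.

Lemma class_of_subtreeK : cancel class_of_subtree subtree_of_class.
Proof.
move=> p; have [q qp] := erase_state_onto p.
by rewrite (subtree_of_classE (q := q)) // inE -qp.
Qed.

Lemma subtree_of_classK : cancel subtree_of_class class_of_subtree.
Proof.
move=> C; have [q qC] := class_nonempty C; apply: val_inj.
by rewrite (subtree_of_classE qC) /= (classE qC).
Qed.

End SubtreeQuotient.

Theorem proposition7 (Sig : finType) (ar : Sig -> nat) (t : tree Sig) :
  wf_tree ar t ->
  isomorphic (seq_subtree_automaton ar t)
             (quotient (subtree_automaton ar t) (sim_h ar t)).
Proof.
move=> _; exists (@class_of_subtree _ ar t), id, (@subtree_of_class _ ar t), id.
split; [exact: class_of_subtree_morphism | exact: subtree_of_class_morphism | | by []].
by split; [exact: class_of_subtreeK | exact: subtree_of_classK].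
Qed.
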